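(* Let $d\ge 3$, $\lambda>0$, $\rho_0=o(1)$, $\mu=\rho_0/(d+\lambda)$, and let $a,b,c\ge0$ be a trajectory of \[ \dot a=-2\,\mathrm{sgn}(g_{w_\star})\sqrt a,\quad \dot b=-2\,\mathrm{sgn}(g_v)\sqrt b,\quad \dot c=-2\,\mathrm{sgn}(g_\perp)\sqrt c, \] with $a(0)=b(0)=c(0)=\mu$, where $r=a+(1+\lambda)b+(d-2)c$, $g_{w_\star}=4(r+2a-3)$, $g_v=4(1+\lambda)(r+2(1+\lambda)b-1)$, $g_\perp=4(r+2c-1)$, $\mathrm{sgn}(0)=0$. Fix $\rho\in(0,1/12)$ and let $T_2'=\inf\{t\ge0:a(t)\ge\rho\}$. Then for all $t\ge T_2'$, \[ a(t)\ge\rho,\quad b(t)\le\frac{1}{3(1+\lambda)},\quad (d-2)c(t)^2\le\frac1{d-2}, \] and consequently \[ 1-\mathrm{Align}(t)\le\frac{1}{2\rho^2}\Big(\frac{1}{9(1+\lambda)^2}+\frac{1}{d-2}\Big). \] In particular, if $d\to\infty$ and $\lambda=\lambda(d)\to\infty$, then $\sup_{t\ge T_2'}(1-\mathrm{Align}(t))\to0$.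
   Context: These ODEs describe the population spectral gradient flow $\dot W=-\mathrm{polar}(\nabla_W\mathcal L(W))$ for the phase-retrieval model $y=(x^\top w_\star)^2+\nu$, $x\sim\mathcal N(0,I_d+\lambda vv^\top)$ with $v\perp w_\star$ unit vectors, network $f_W(x)=\sum_{j=1}^d(w_j^\top x)^2$, in the coordinates $WW^\top=a\,w_\star w_\star^\top+b\,vv^\top+c(I-w_\star w_\star^\top-vv^\top)$; $\mathrm{polar}(A)=A(A^\top A)^{-1/2}$. The alignment is $\mathrm{Align}(t)=a(t)/\sqrt{a(t)^2+b(t)^2+(d-2)c(t)^2}$. $d$ is taken large. *)

From Stdlib Require Import Reals.
From Coquelicot Require Import Coquelicot.
Open Scope R_scope.

Definition r_fun (d : nat) (lam a b c : R) : R :=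
  a + (1 + lam) * b + (INR d - 2) * c.

Definition g_w (d : nat) (lam a b c : R) : R := 4 * (r_fun d lam a b c + 2 * a - 3).
Definition g_v (d : nat) (lam a b c : R) : R :=
  4 * (1 + lam) * (r_fun d lam a b c + 2 * (1 + lam) * b - 1).
Definition g_perp (d : nat) (lam a b c : R) : R := 4 * (r_fun d lam a b c + 2 * c - 1).

(* Set-valued sign (Filippov regularisation of sgn, with sgn(0)=0 contained
   in the value [-1,1] at the discontinuity):  s is an admissible sign of g. *)
Definition sgn_set (g s : R) : Prop :=
  (0 < g /\ s = 1) \/ (g < 0 /\ s = -1) \/ (g = 0 /\ -1 <= s <= 1).

Definition right_deriv (f : R -> R) (t l : R) : Prop :=
  filterlim (fun h => (f (t + h) - f t) / h) (at_right 0) (locally l).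

Definition trajectory (d : nat) (lam mu : R) (a b c : R -> R) : Prop :=
  a 0 = mu /\ b 0 = mu /\ c 0 = mu /\
  (forall t, 0 <= t -> 0 <= a t /\ 0 <= b t /\ 0 <= c t) /\
  (forall t, 0 < t -> continuous a t /\ continuous b t /\ continuous c t) /\
  (forall t, 0 <= t ->
     exists sa sb sc : R,
       sgn_set (g_w d lam (a t) (b t) (c t)) sa /\
       sgn_set (g_v d lam (a t) (b t) (c t)) sb /\
       sgn_set (g_perp d lam (a t) (b t) (c t)) sc /\
       right_deriv a t (-2 * sa * sqrt (a t)) /\
       right_deriv b t (-2 * sb * sqrt (b t)) /\
       right_deriv c t (-2 * sc * sqrt (c t))).

Definition mu_of (d : nat) (lam rho0 : R) : R := rho0 / (INR d + lam).

(* T_2' = inf { t >= 0 : a(t) >= rho }  (= +oo if the set is empty) *)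
Definition T2' (rho : R) (a : R -> R) : Rbar :=
  Glb_Rbar (fun s => 0 <= s /\ rho <= a s).

Definition Align (d : nat) (a b c : R -> R) (t : R) : R :=
  a t / sqrt (a t ^ 2 + b t ^ 2 + (INR d - 2) * c t ^ 2).

(** The three conditions [b <= 1/(3(1+lam))], [c <= 1/d] and, after [T2'],
    [a >= rho] cut out a forward-invariant region.  Each is a barrier argument
    for a trajectory that is continuous and has right derivatives: at the
    level [a = rho], and at any level strictly above the bounds for [b] and
    [c], the relevant gradient has a strict sign, so the sign-gradient flow
    pushes the coordinate back inside.  For [a] this uses the bounds on [b] and
    [c]: they give [r + 2a - 3 <= 3a - 5/3 < 0].  The initial value
    [mu = rho0/(d+lam)] lies below the bounds on [b] and [c] as soon as
    [rho0 <= 1/3], and the infimum [T2'] is attained by right continuity.  The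
    alignment bound is then algebra:
    [1 - a/q = (q^2 - a^2)/(q(q+a)) <= (b^2 + (d-2)c^2)/(2 a^2)]. *)

From Stdlib Require Import Reals Lra Lia.
From Coquelicot Require Import Coquelicot.
Open Scope R_scope.

Definition right_continuous (f : R -> R) (u : R) : Prop :=
  forall eps, 0 < eps ->
    exists del, 0 < del /\ forall h, 0 < h < del -> Rabs (f (u + h) - f u) < eps.

Definition right_decreasing (f : R -> R) (u : R) : Prop :=
  exists del, 0 < del /\ forall h, 0 < h < del -> f (u + h) < f u.

Lemma right_deriv_spec f t l : right_deriv f t l ->
  forall eps, 0 < eps -> exists del, 0 < del /\
    forall h, 0 < h < del -> Rabs ((f (t + h) - f t) / h - l) < eps.
Proof.
  intros Hf eps Heps.
  destruct (proj1 (filterlim_locally _ _) Hf (mkposreal eps Heps)) as [del Hdel].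
  exists del; split; [apply cond_pos |].
  intros h [Hh0 Hh]. apply Hdel; [| exact Hh0].
  change (Rabs (h - 0) < del). rewrite Rminus_0_r, Rabs_pos_eq; lra.
Qed.

Lemma continuous_spec f u : continuous f u ->
  forall eps, 0 < eps -> exists del, 0 < del /\
    forall y, Rabs (y - u) < del -> Rabs (f y - f u) < eps.
Proof.
  intros Hf eps Heps.
  destruct (proj1 (filterlim_locally _ _) Hf (mkposreal eps Heps)) as [del Hdel].
  exists del; split; [apply cond_pos |].
  intros y Hy. apply (Hdel y Hy).
Qed.

Lemma right_deriv_right_continuous f t l :
  right_deriv f t l -> right_continuous f t.
Proof.
  intros Hf eps Heps.
  destruct (right_deriv_spec f t l Hf 1 Rlt_0_1) as [del [Hdel Hq]].
  assert (Hl : 0 < Rabs l + 1) by (pose proof (Rabs_pos l); lra).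
  exists (Rmin del (eps / (Rabs l + 1))); split.
  { apply Rmin_glb_lt; [lra | apply Rdiv_lt_0_compat; lra]. }
  intros h [Hh0 Hh].
  pose proof (Rlt_le_trans _ _ _ Hh (Rmin_l _ _)) as Hh_del.
  pose proof (Rlt_le_trans _ _ _ Hh (Rmin_r _ _)) as Hh_eps.
  specialize (Hq h (conj Hh0 Hh_del)).
  set (q := (f (t + h) - f t) / h) in Hq.
  replace (f (t + h) - f t) with (q * h) by (unfold q; field; lra).
  rewrite Rabs_mult, (Rabs_pos_eq h) by lra.
  assert (Hq_bound : Rabs q < Rabs l + 1) by (pose proof (Rabs_triang_inv q l); lra).
  apply Rmult_lt_compat_r with (r := Rabs l + 1) in Hh_eps; [| lra].
  replace (eps / (Rabs l + 1) * (Rabs l + 1)) with eps in Hh_eps by (field; lra).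
  pose proof (Rabs_pos q). nra.
Qed.

Lemma right_deriv_neg_right_decreasing f t l :
  right_deriv f t l -> l < 0 -> right_decreasing f t.
Proof.
  intros Hf Hl.
  destruct (right_deriv_spec f t l Hf (- l)) as [del [Hdel Hq]]; [lra |].
  exists del; split; [exact Hdel |].
  intros h Hh. specialize (Hq h Hh). apply Rabs_def2 in Hq.
  assert (Hq_neg : (f (t + h) - f t) / h < 0) by lra.
  enough (f (t + h) - f t < 0) by lra.
  replace (f (t + h) - f t) with ((f (t + h) - f t) / h * h) by (field; lra).
  nra.
Qed.

Lemma right_deriv_opp f t l :
  right_deriv f t l -> right_deriv (fun s => - f s) t (- l).
Proof.
  intros Hf.
  apply (filterlim_ext (fun h => opp ((f (t + h) - f t) / h))).
  { intros h. change (- ((f (t + h) - f t) / h) = (- f (t + h) - - f t) / h).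
    unfold Rdiv. ring. }
  eapply filterlim_comp; [exact Hf | apply (filterlim_opp l)].
Qed.

Lemma sgn_flow_right_decreasing f t g s :
  0 < f t -> 0 < g -> sgn_set g s -> right_deriv f t (-2 * s * sqrt (f t)) ->
  right_decreasing f t.
Proof.
  intros Hft Hg Hs Hf.
  assert (s = 1) as -> by (unfold sgn_set in Hs; lra).
  apply (right_deriv_neg_right_decreasing f t _ Hf).
  pose proof (sqrt_lt_R0 _ Hft). lra.
Qed.

Lemma sgn_flow_right_increasing f t g s :
  0 < f t -> g < 0 -> sgn_set g s -> right_deriv f t (-2 * s * sqrt (f t)) ->
  right_decreasing (fun u => - f u) t.
Proof.
  intros Hft Hg Hs Hf.
  assert (s = -1) as -> by (unfold sgn_set in Hs; lra).
  apply (right_deriv_neg_right_decreasing _ t _ (right_deriv_opp f t _ Hf)).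
  pose proof (sqrt_lt_R0 _ Hft). lra.
Qed.

Lemma right_continuous_opp f u :
  right_continuous f u -> right_continuous (fun s => - f s) u.
Proof.
  intros Hf eps Heps. destruct (Hf eps Heps) as [del [Hdel Hnear]].
  exists del; split; [exact Hdel |]. intros h Hh.
  rewrite <- Rabs_Ropp. replace (- (- f (u + h) - - f u)) with (f (u + h) - f u) by ring.
  apply Hnear, Hh.
Qed.

(** The barrier principle: at the last time [s] of [[T, t1]] up to which
    [f <= K], continuity gives [f s <= K] and the two right-hand hypotheses
    keep [f <= K] a little beyond [s]. *)
Lemma barrier_le (f : R -> R) (T K : R) :
  f T <= K ->
  (forall u, T < u -> continuous f u) ->
  (forall u, T <= u -> right_continuous f u) ->
  (forall u, T <= u -> f u = K -> right_decreasing f u) ->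
  forall t, T <= t -> f t <= K.
Proof.
  intros HT Hcont Hrcont Hlevel t1 Ht1.
  destruct (Rle_or_lt (f t1) K) as [| Hgt]; [assumption | exfalso].
  set (E := fun u => T <= u <= t1 /\ f u <= K).
  assert (Hbound : bound E) by (exists t1; intros u [[_ ?] _]; lra).
  assert (Hne : exists x, E x) by (exists T; unfold E; lra).
  destruct (completeness E Hbound Hne) as [s [Hub Hlub]].
  assert (HTs : T <= s) by (apply Hub; unfold E; lra).
  assert (Hst1 : s <= t1) by (apply Hlub; intros u [[_ ?] _]; lra).
  assert (Hfs : f s <= K).
  { destruct (Rle_or_lt (f s) K) as [| Hlt]; [assumption | exfalso].
    destruct (Req_dec s T) as [-> | HsT]; [lra |].
    destruct (continuous_spec f s (Hcont s ltac:(lra)) (f s - K)) as [del [Hdel Hnear]];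
      [lra |].
    assert (s <= s - del / 2); [| lra].
    apply Hlub. intros u [[Hu1 Hu2] Hu3].
    destruct (Rle_or_lt u (s - del / 2)) as [| Hu]; [assumption | exfalso].
    assert (u <= s) by (apply Hub; unfold E; lra).
    assert (Hball : Rabs (f u - f s) < f s - K) by (apply Hnear; rewrite Rabs_left1; lra).
    apply Rabs_def2 in Hball. lra. }
  assert (Hst : s < t1) by (destruct (Req_dec s t1); subst; lra).
  assert (Hbeyond : exists del, 0 < del /\ forall h, 0 < h < del -> f (s + h) <= K).
  { destruct (Req_dec (f s) K) as [Heq | Hneq].
    - destruct (Hlevel s HTs Heq) as [del [Hdel Hdec]].
      exists del; split; [exact Hdel |]. intros h Hh. specialize (Hdec h Hh). lra.
    - destruct (Hrcont s HTs (K - f s)) as [del [Hdel Hnear]]; [lra |].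
      exists del; split; [exact Hdel |].
      intros h Hh. specialize (Hnear h Hh). apply Rabs_def2 in Hnear. lra. }
  destruct Hbeyond as [del [Hdel Hle]].
  set (h := Rmin (del / 2) ((t1 - s) / 2)).
  assert (0 < h) by (apply Rmin_glb_lt; lra).
  assert (h <= del / 2) by apply Rmin_l.
  assert (h <= (t1 - s) / 2) by apply Rmin_r.
  assert (s + h <= s); [| lra].
  apply Hub. split; [lra |]. apply Hle. lra.
Qed.

Lemma T2'_attained (f : R -> R) rho t :
  (forall u, 0 <= u -> right_continuous f u) ->
  Rbar_le (T2' rho f) (Finite t) ->
  exists T, 0 <= T <= t /\ rho <= f T.
Proof.
  intros Hrcont Hle. unfold T2' in Hle.
  destruct (Glb_Rbar_correct (fun s => 0 <= s /\ rho <= f s)) as [Hlb Hglb].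
  assert (H0 : Rbar_le (Finite 0) (Glb_Rbar (fun s => 0 <= s /\ rho <= f s))).
  { apply Hglb. intros x [Hx _]. exact Hx. }
  destruct (Glb_Rbar (fun s => 0 <= s /\ rho <= f s)) as [T | |];
    simpl in Hle, H0; try contradiction.
  exists T; split; [lra |].
  destruct (Rle_or_lt rho (f T)) as [| Hlt]; [assumption | exfalso].
  destruct (Hrcont T H0 (rho - f T)) as [del [Hdel Hnear]]; [lra |].
  assert (Rbar_le (Finite (T + del / 2)) (Finite T)) as Hcontra; [| simpl in Hcontra; lra].
  apply Hglb. intros x [Hx Hfx]. simpl.
  destruct (Rle_or_lt (T + del / 2) x) as [| Hx_near]; [assumption | exfalso].
  assert (HTx : Rbar_le (Finite T) (Finite x)) by (apply Hlb; split; assumption).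
  simpl in HTx. destruct (Req_dec x T) as [-> | HxT]; [lra |].
  specialize (Hnear (x - T) ltac:(lra)). replace (T + (x - T)) with x in Hnear by ring.
  apply Rabs_def2 in Hnear. lra.
Qed.

Lemma g_v_pos d lam a b c :
  0 < 1 + lam -> 2 <= INR d -> 0 <= a -> 0 <= c -> 1 / (3 * (1 + lam)) < b ->
  0 < g_v d lam a b c.
Proof.
  intros Hlam Hd Ha Hc Hb.
  assert (H3b : 1 < 3 * (1 + lam) * b).
  { apply Rmult_lt_compat_l with (r := 3 * (1 + lam)) in Hb; [| lra].
    replace (3 * (1 + lam) * (1 / (3 * (1 + lam)))) with 1 in Hb by (field; lra). lra. }
  assert (0 <= (INR d - 2) * c) by (apply Rmult_le_pos; lra).
  unfold g_v, r_fun. apply Rmult_lt_0_compat; [lra |]. nra.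
Qed.

Lemma g_perp_pos d lam a b c :
  0 < 1 + lam -> 0 < INR d -> 0 <= a -> 0 <= b -> 1 / INR d < c ->
  0 < g_perp d lam a b c.
Proof.
  intros Hlam Hd Ha Hb Hc.
  assert (Hdc : 1 < INR d * c).
  { apply Rmult_lt_compat_l with (r := INR d) in Hc; [| lra].
    replace (INR d * (1 / INR d)) with 1 in Hc by (field; lra). lra. }
  assert (0 <= (1 + lam) * b) by (apply Rmult_le_pos; lra).
  unfold g_perp, r_fun. lra.
Qed.

Lemma g_w_neg d lam a b c :
  a < 5 / 9 -> (1 + lam) * b <= 1 / 3 -> (INR d - 2) * c <= 1 ->
  g_w d lam a b c < 0.
Proof. intros. unfold g_w, r_fun. lra. Qed.

Lemma INR_ge3 d : (3 <= d)%nat -> 3 <= INR d.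
Proof. intros Hd. apply le_INR in Hd. simpl in Hd. lra. Qed.

Section Trajectory.

Variables (d : nat) (lam mu : R) (a b c : R -> R).
Hypothesis Hd : (3 <= d)%nat.
Hypothesis Hlam : 0 < lam.
Hypothesis Htraj : trajectory d lam mu a b c.
Hypothesis Hmu_b : mu <= 1 / (3 * (1 + lam)).
Hypothesis Hmu_c : mu <= 1 / INR d.

Lemma traj_nonneg t : 0 <= t -> 0 <= a t /\ 0 <= b t /\ 0 <= c t.
Proof. destruct Htraj as (_ & _ & _ & Hnn & _). apply Hnn. Qed.

Lemma traj_continuous t : 0 < t -> continuous a t /\ continuous b t /\ continuous c t.
Proof. destruct Htraj as (_ & _ & _ & _ & Hcont & _). apply Hcont. Qed.

Lemma traj_flow t : 0 <= t ->
  exists sa sb sc : R,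
    sgn_set (g_w d lam (a t) (b t) (c t)) sa /\
    sgn_set (g_v d lam (a t) (b t) (c t)) sb /\
    sgn_set (g_perp d lam (a t) (b t) (c t)) sc /\
    right_deriv a t (-2 * sa * sqrt (a t)) /\
    right_deriv b t (-2 * sb * sqrt (b t)) /\
    right_deriv c t (-2 * sc * sqrt (c t)).
Proof. destruct Htraj as (_ & _ & _ & _ & _ & Hflow). apply Hflow. Qed.

Lemma traj_right_continuous t : 0 <= t ->
  right_continuous a t /\ right_continuous b t /\ right_continuous c t.
Proof.
  intros Ht. destruct (traj_flow t Ht) as (sa & sb & sc & _ & _ & _ & Ha & Hb & Hc).
  repeat split; eapply right_deriv_right_continuous; eassumption.
Qed.

(** The level must be strictly above [1/(3(1+lam))]: on that level itself
    [g_v] may vanish. *)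
Lemma traj_b_le_level K : 1 / (3 * (1 + lam)) < K -> forall t, 0 <= t -> b t <= K.
Proof.
  intros HK. apply barrier_le.
  - destruct Htraj as (_ & -> & _). lra.
  - intros u Hu. apply (traj_continuous u Hu).
  - intros u Hu. apply (traj_right_continuous u Hu).
  - intros u Hu Hbu.
    destruct (traj_flow u Hu) as (sa & sb & sc & _ & Hsb & _ & _ & Hdb & _).
    destruct (traj_nonneg u Hu) as (Ha & _ & Hc).
    pose proof (INR_ge3 d Hd).
    assert (0 < 1 / (3 * (1 + lam))) by (apply Rdiv_lt_0_compat; lra).
    apply (sgn_flow_right_decreasing b u (g_v d lam (a u) (b u) (c u)) sb);
      [lra | apply g_v_pos; lra | exact Hsb | exact Hdb].
Qed.

Lemma traj_b_le t : 0 <= t -> b t <= 1 / (3 * (1 + lam)).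
Proof.
  intros Ht. apply Rle_plus_epsilon. intros eps Heps.
  apply traj_b_le_level; [lra | exact Ht].
Qed.

Lemma traj_c_le_level K : 1 / INR d < K -> forall t, 0 <= t -> c t <= K.
Proof.
  intros HK. pose proof (INR_ge3 d Hd). apply barrier_le.
  - destruct Htraj as (_ & _ & -> & _). lra.
  - intros u Hu. apply (traj_continuous u Hu).
  - intros u Hu. apply (traj_right_continuous u Hu).
  - intros u Hu Hcu.
    destruct (traj_flow u Hu) as (sa & sb & sc & _ & _ & Hsc & _ & _ & Hdc).
    destruct (traj_nonneg u Hu) as (Ha & Hb & _).
    assert (0 < 1 / INR d) by (apply Rdiv_lt_0_compat; lra).
    apply (sgn_flow_right_decreasing c u (g_perp d lam (a u) (b u) (c u)) sc);
      [lra | apply g_perp_pos; lra | exact Hsc | exact Hdc].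
Qed.

Lemma traj_c_le t : 0 <= t -> c t <= 1 / INR d.
Proof.
  intros Ht. apply Rle_plus_epsilon. intros eps Heps.
  apply traj_c_le_level; [lra | exact Ht].
Qed.

Lemma traj_a_ge rho T : 0 < rho < 5 / 9 -> 0 <= T -> rho <= a T ->
  forall t, T <= t -> rho <= a t.
Proof.
  intros Hrho HT HaT t Ht.
  pose proof (INR_ge3 d Hd).
  enough (- a t <= - rho) by lra.
  apply (barrier_le (fun s => - a s) T); [lra | | | | exact Ht].
  - intros u Hu. exact (continuous_opp a u (proj1 (traj_continuous u ltac:(lra)))).
  - intros u Hu. apply right_continuous_opp, (traj_right_continuous u); lra.
  - intros u Hu Hau.
    assert (Hu0 : 0 <= u) by lra.
    destruct (traj_flow u Hu0) as (sa & sb & sc & Hsa & _ & _ & Hda & _).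
    destruct (traj_nonneg u Hu0) as (_ & Hb & Hc).
    assert (Hb3 : (1 + lam) * b u <= 1 / 3).
    { pose proof (traj_b_le u Hu0) as Hbu.
      apply Rmult_le_compat_l with (r := 1 + lam) in Hbu; [| lra].
      replace ((1 + lam) * (1 / (3 * (1 + lam)))) with (1 / 3) in Hbu by (field; lra).
      exact Hbu. }
    assert (Hc1 : (INR d - 2) * c u <= 1).
    { pose proof (traj_c_le u Hu0) as Hcu.
      apply Rmult_le_compat_l with (r := INR d) in Hcu; [| lra].
      replace (INR d * (1 / INR d)) with 1 in Hcu by (field; lra). nra. }
    apply (sgn_flow_right_increasing a u (g_w d lam (a u) (b u) (c u)) sa);
      [lra | apply g_w_neg; lra | exact Hsa | exact Hda].
Qed.

End Trajectory.

Lemma mu_of_le d lam r0 : (3 <= d)%nat -> 0 < lam -> r0 <= 1 / 3 ->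
  mu_of d lam r0 <= 1 / (3 * (1 + lam)) /\ mu_of d lam r0 <= 1 / INR d.
Proof.
  intros Hd Hlam Hr0. pose proof (INR_ge3 d Hd). unfold mu_of.
  set (n := INR d) in *.
  assert (Hmu : r0 / (n + lam) * (n + lam) = r0) by (field; lra).
  set (mu := r0 / (n + lam)) in *.
  split.
  - apply Rmult_le_reg_r with (3 * (1 + lam)); [lra |].
    replace (1 / (3 * (1 + lam)) * (3 * (1 + lam))) with 1 by (field; lra).
    destruct (Rle_or_lt mu 0); nra.
  - apply Rmult_le_reg_r with n; [lra |].
    replace (1 / n * n) with 1 by (field; lra).
    destruct (Rle_or_lt mu 0); nra.
Qed.

Lemma mul_sq_le_inv_sub2 n c : 2 < n -> 0 <= c -> c <= 1 / n ->
  (n - 2) * c ^ 2 <= 1 / (n - 2).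
Proof.
  intros Hn Hc0 Hc.
  assert (Hnc : n * c <= 1).
  { apply Rmult_le_compat_l with (r := n) in Hc; [| lra].
    replace (n * (1 / n)) with 1 in Hc by (field; lra). exact Hc. }
  apply Rmult_le_reg_r with (n - 2); [lra |].
  replace (1 / (n - 2) * (n - 2)) with 1 by (field; lra).
  assert (0 <= (n - 2) * c <= n * c) by nra.
  nra.
Qed.

Lemma one_sub_align_le m rho a b c B C :
  0 < rho -> rho <= a -> 0 <= b <= B -> 0 <= m -> m * c ^ 2 <= C ->
  1 - a / sqrt (a ^ 2 + b ^ 2 + m * c ^ 2) <= 1 / (2 * rho ^ 2) * (B ^ 2 + C).
Proof.
  intros Hrho Ha Hb Hm HC.
  set (S := b ^ 2 + m * c ^ 2).
  assert (HS0 : 0 <= S) by (unfold S; pose proof (pow2_ge_0 c); nra).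
  assert (HSB : S <= B ^ 2 + C) by (unfold S; nra).
  replace (a ^ 2 + b ^ 2 + m * c ^ 2) with (a ^ 2 + S) by (unfold S; ring).
  set (q := sqrt (a ^ 2 + S)).
  assert (Hq2 : q * q = a ^ 2 + S) by (apply sqrt_sqrt; nra).
  assert (Hq0 : 0 <= q) by apply sqrt_pos.
  assert (Hqa : a <= q) by nra.
  assert (Hgap : 1 - a / q = S / (q * (q + a))).
  { replace S with (q * q - a ^ 2) by lra. field; split; nra. }
  rewrite Hgap. unfold Rdiv.
  apply Rle_trans with (S * / (2 * a ^ 2)).
  { apply Rmult_le_compat_l; [exact HS0 |]. apply Rinv_le_contravar; nra. }
  rewrite Rmult_1_l, Rmult_comm.
  apply Rmult_le_compat; [left; apply Rinv_0_lt_compat; nra | exact HS0 | | exact HSB].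
  apply Rinv_le_contravar; nra.
Qed.

Lemma alignment_bounds d lam r0 rho a b c t :
  (3 <= d)%nat -> 0 < lam -> r0 <= 1 / 3 -> 0 < rho < 5 / 9 ->
  trajectory d lam (mu_of d lam r0) a b c ->
  Rbar_le (T2' rho a) (Finite t) ->
  rho <= a t /\
  b t <= 1 / (3 * (1 + lam)) /\
  (INR d - 2) * c t ^ 2 <= 1 / (INR d - 2) /\
  1 - Align d a b c t
    <= 1 / (2 * rho ^ 2) * (1 / (9 * (1 + lam) ^ 2) + 1 / (INR d - 2)).
Proof.
  intros Hd Hlam Hr0 Hrho Htraj Ht.
  pose proof (INR_ge3 d Hd).
  destruct (mu_of_le d lam r0 Hd Hlam Hr0) as [Hmu_b Hmu_c].
  destruct (T2'_attained a rho t) as (T & [HT0 HTt] & HaT); [| exact Ht |].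
  { intros u Hu. apply (traj_right_continuous d lam _ a b c Htraj u Hu). }
  assert (Ht0 : 0 <= t) by lra.
  destruct (traj_nonneg d lam _ a b c Htraj t Ht0) as (Ha & Hb & Hc).
  pose proof (traj_a_ge d lam _ a b c Hd Hlam Htraj Hmu_b Hmu_c rho T Hrho HT0 HaT t HTt) as HA.
  pose proof (traj_b_le d lam _ a b c Hd Hlam Htraj Hmu_b t Ht0) as HB.
  pose proof (mul_sq_le_inv_sub2 (INR d) (c t) ltac:(lra) Hc
                (traj_c_le d lam _ a b c Hd Hlam Htraj Hmu_c t Ht0)) as HC.
  repeat split; [exact HA | exact HB | exact HC |].
  replace (1 / (9 * (1 + lam) ^ 2)) with ((1 / (3 * (1 + lam))) ^ 2) by (field; lra).
  apply one_sub_align_le; auto; lra.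
Qed.

Lemma inv_le_of_inv_lt M x : 0 < M -> 1 / M < x -> 1 / x <= M.
Proof.
  intros HM Hx.
  unfold Rdiv in *. rewrite Rmult_1_l in *.
  pose proof (Rinv_0_lt_compat M HM).
  rewrite <- (Rinv_inv M). apply Rinv_le_contravar; lra.
Qed.

Lemma alignment_bound_le_eps rho eps l n :
  0 < rho -> 0 < eps -> 0 < l -> 1 / (rho ^ 2 * eps) < l -> 1 / (rho ^ 2 * eps) + 2 < n ->
  1 / (2 * rho ^ 2) * (1 / (9 * (1 + l) ^ 2) + 1 / (n - 2)) <= eps.
Proof.
  intros Hrho Heps Hl Hl_large Hn_large.
  set (M := rho ^ 2 * eps) in *.
  assert (HM : 0 < M) by (unfold M; apply Rmult_lt_0_compat; nra).
  assert (Hl_term : 1 / (9 * (1 + l) ^ 2) <= M).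
  { apply Rle_trans with (1 / l); [| apply inv_le_of_inv_lt; lra].
    unfold Rdiv. rewrite !Rmult_1_l. apply Rinv_le_contravar; nra. }
  assert (Hn_term : 1 / (n - 2) <= M) by (apply inv_le_of_inv_lt; lra).
  replace eps with (1 / (2 * rho ^ 2) * (2 * M)) by (unfold M; field; lra).
  apply Rmult_le_compat_l; [| lra].
  left. apply Rdiv_lt_0_compat; nra.
Qed.

Theorem propositionC4
  (rho0 : nat -> R) (Hrho0 : is_lim_seq rho0 0)
  (rho : R) (Hrho : 0 < rho < 1 / 12) :
  (exists D : nat, forall d : nat, (D <= d)%nat -> (3 <= d)%nat ->
     forall lam : R, 0 < lam ->
     forall a b c : R -> R,
       trajectory d lam (mu_of d lam (rho0 d)) a b c ->
       forall t : R, Rbar_le (T2' rho a) (Finite t) ->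
         rho <= a t /\
         b t <= 1 / (3 * (1 + lam)) /\
         (INR d - 2) * c t ^ 2 <= 1 / (INR d - 2) /\
         1 - Align d a b c t
           <= 1 / (2 * rho ^ 2) * (1 / (9 * (1 + lam) ^ 2) + 1 / (INR d - 2)))
  /\
  (forall lam : nat -> R, (forall d, 0 < lam d) -> is_lim_seq lam p_infty ->
     forall eps : R, 0 < eps ->
     exists D : nat, forall d : nat, (D <= d)%nat -> (3 <= d)%nat ->
     forall a b c : R -> R,
       trajectory d (lam d) (mu_of d (lam d) (rho0 d)) a b c ->
       forall t : R, Rbar_le (T2' rho a) (Finite t) ->
         1 - Align d a b c t <= eps).
Proof.
  apply is_lim_seq_spec in Hrho0.
  destruct (Hrho0 (mkposreal (1 / 3) ltac:(lra))) as [D1 HD1].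
  assert (Hsmall : forall d, (D1 <= d)%nat -> rho0 d <= 1 / 3).
  { intros d Hd. specialize (HD1 d Hd). simpl in HD1.
    rewrite Rminus_0_r in HD1. apply Rabs_def2 in HD1. lra. }
  split.
  { exists D1. intros d Hd H3 lam Hlam a b c Htraj t Ht.
    apply (alignment_bounds d lam (rho0 d)); auto; lra. }
  intros lam Hlam Hlim eps Heps.
  set (M := 1 / (rho ^ 2 * eps)).
  destruct (proj2 (is_lim_seq_spec _ _) Hlim M) as [D2 HD2].
  destruct (proj2 (is_lim_seq_spec _ _) is_lim_seq_INR (M + 2)) as [D3 HD3].
  exists (max D1 (max D2 D3)). intros d Hd H3 a b c Htraj t Ht.
  eapply Rle_trans.
  - apply (alignment_bounds d (lam d) (rho0 d) rho a b c t); auto; [apply Hsmall; lia | lra].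
  - apply alignment_bound_le_eps; auto; [lra | apply HD2 | apply HD3]; lia.
Qed.
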